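(* Let $2\le d\le D$ be integers and let $g:(1,\infty)\to(0,\infty)$ be non-decreasing with $$d\,g(x)\le g\!\left(\tfrac{d^2}{d-1}x\right)\quad\text{and}\quad g\!\left(\tfrac{D^2}{D-1}x\right)\le D\,g(x)\quad\text{for all }x.$$ Then there exist a sequence $\bar d\in\{d,D\}^{\mathbb N}$ and a constant $C\ge1$ such that $\frac1C g(x)\le h_{\bar d}(x)\le C g(x)$ for all $x>1$.
   Context: For a sequence $\bar d=(d_i)_{i\ge0}$ of integers $\ge2$, $p_i=\frac{d_i-1}{d_i^2}$. For real $x>1$, $k(x)$ is the unique integer $k\ge0$ with $\frac{1}{p_0\cdots p_{k}}\ge x>\frac{1}{p_0\cdots p_{k-1}}$ (empty product $=1$), and $h_{\bar d}(x)=d_0d_1\cdots d_{k(x)}$. *)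

From Stdlib Require Import Reals Lra Lia ClassicalEpsilon.
Open Scope R_scope.

Definition pp (ds : nat -> nat) (i : nat) : R :=
  (INR (ds i) - 1) / (INR (ds i))^2.

Fixpoint prodp (ds : nat -> nat) (n : nat) : R :=
  match n with
  | O => 1
  | S m => prodp ds m * pp ds m
  end.

Fixpoint prodd (ds : nat -> nat) (n : nat) : R :=
  match n with
  | O => 1
  | S m => prodd ds m * INR (ds m)
  end.

Definition is_kx (ds : nat -> nat) (x : R) (k : nat) : Prop :=
  x <= / prodp ds (S k) /\ / prodp ds k < x.

(* k(x): the (unique, when d_i >= 2 and x > 1) k with is_kx; chosen by epsilon *)
Definition kx (ds : nat -> nat) (x : R) : nat :=
  epsilon (inhabits 0%nat) (fun k => is_kx ds x k).

Definition h (ds : nat -> nat) (x : R) : R := prodd ds (S (kx ds x)).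

From Stdlib Require Import Reals Lra Lia ClassicalEpsilon.
Open Scope R_scope.

(* Write q(c) = c^2/(c-1) = 1/p for a digit c, Q_n = 1/(p_0...p_{n-1}) and
   H_n = d_0...d_{n-1}; then Q_{n+1} = q(d_n) Q_n and H_{n+1} = d_n H_n.
   With monotonicity, the hypotheses on g give that multiplying the argument
   by q(c), for a digit d <= c <= D, multiplies g by a factor in [d, D].
   The sequence is built greedily: d_n = d when g(Q_n) <= H_n (H is ahead
   of g, so take the slow digit) and d_n = D otherwise.  One step of this
   rule preserves any two-sided bound L g(Q_n) <= H_n <= U g(Q_n) as soon as
   L D <= d <= D <= U d, so such a bound holds for all n >= 1.
   Finally h(x) = H_{k+1} where Q_k < x <= Q_{k+1}; monotonicity of g turns
   the bound at the points Q_n into a bound g(x) ~ h(x) for every x > 1.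
   The file first collects the arithmetic of the products p and d and the
   existence of k(x), then proves the transfer from the points Q_n to all x,
   then constructs the greedy sequence, and derives the theorem. *)

Definition qq (c : nat) : R := (INR c)^2 / (INR c - 1).

(* c^2/(c-1) >= 4 for c >= 2, by (c-2)^2 >= 0. *)
Lemma qq_ge4 c : (2 <= c)%nat -> 4 <= qq c.
Proof.
  intro Hc. apply le_INR in Hc. simpl in Hc. unfold qq.
  apply Rmult_le_reg_r with (INR c - 1); [lra|].
  unfold Rdiv. rewrite Rmult_assoc, Rinv_l by lra. nra.
Qed.

Lemma qq_mono c e : (2 <= c)%nat -> (c <= e)%nat -> qq c <= qq e.
Proof.
  intros Hc He. apply le_INR in Hc, He. simpl in Hc.
  assert (Hdiff : qq e - qq c = (INR e - INR c) * ((INR c - 1) * (INR e - 1) - 1)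
                                 / ((INR c - 1) * (INR e - 1))).
  { unfold qq. field. lra. }
  assert (0 <= (INR e - INR c) * ((INR c - 1) * (INR e - 1) - 1)
               / ((INR c - 1) * (INR e - 1))).
  { apply Rmult_le_pos; [apply Rmult_le_pos; nra|].
    left. apply Rinv_0_lt_compat. nra. }
  lra.
Qed.

Section Products.

Variable ds : nat -> nat.
Hypothesis ds_ge2 : forall i, (2 <= ds i)%nat.

Lemma prodp_pos n : 0 < prodp ds n.
Proof.
  induction n as [|n IH]; simpl; [lra|].
  apply Rmult_lt_0_compat; [exact IH|].
  pose proof (le_INR _ _ (ds_ge2 n)) as Hn. simpl in Hn.
  unfold pp. apply Rdiv_lt_0_compat; nra.
Qed.

Lemma prodd_pos n : 0 < prodd ds n.
Proof.
  induction n as [|n IH]; simpl; [lra|].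
  pose proof (le_INR _ _ (ds_ge2 n)) as Hn. simpl in Hn. nra.
Qed.

Lemma prodp_inv_succ n : / prodp ds (S n) = qq (ds n) * / prodp ds n.
Proof.
  simpl. pose proof (prodp_pos n).
  pose proof (le_INR _ _ (ds_ge2 n)) as Hn. simpl in Hn.
  unfold pp, qq. field. split; lra.
Qed.

Lemma prodp_inv_ge n : 1 + INR n <= / prodp ds n.
Proof.
  induction n as [|n IH].
  - simpl. rewrite Rinv_1. lra.
  - rewrite prodp_inv_succ, S_INR.
    pose proof (qq_ge4 _ (ds_ge2 n)). pose proof (pos_INR n). nra.
Qed.

Lemma prodp_inv_succ_gt1 n : 1 < / prodp ds (S n).
Proof. pose proof (prodp_inv_ge (S n)) as hQ. rewrite S_INR in hQ. pose proof (pos_INR n). lra. Qed.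

(* Since Q_0 = 1 < x and Q_n is unbounded, some k brackets x. *)
Lemma exists_kx x : 1 < x -> exists k, is_kx ds x k.
Proof.
  intro Hx.
  assert (Hbelow : forall n, x <= / prodp ds n -> exists k, is_kx ds x k).
  { induction n as [|n IH]; intro Hle.
    - simpl in Hle. rewrite Rinv_1 in Hle. lra.
    - destruct (Rle_dec x (/ prodp ds n)) as [Hn|Hn]; [auto|].
      exists n. split; lra. }
  destruct (INR_unbounded x) as [n Hn].
  apply (Hbelow n). pose proof (prodp_inv_ge n). lra.
Qed.

Lemma kx_spec x : 1 < x -> is_kx ds x (kx ds x).
Proof. intro Hx. unfold kx. apply epsilon_spec, exists_kx, Hx. Qed.

End Products.

Lemma comparable_of_bounds (f F : R -> R) c1 c2 :
  (forall x, 1 < x -> 0 < f x) -> (forall x, 1 < x -> 0 <= F x) ->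
  (forall x, 1 < x -> f x <= c1 * F x) -> (forall x, 1 < x -> F x <= c2 * f x) ->
  exists C, 1 <= C /\ forall x, 1 < x -> / C * f x <= F x <= C * f x.
Proof.
  intros fpos Fnn lower upper.
  exists (Rmax 1 (Rmax c1 c2)).
  set (C := Rmax 1 (Rmax c1 c2)).
  assert (C1 : 1 <= C) by apply Rmax_l.
  assert (Cc1 : c1 <= C) by (eapply Rle_trans; [apply Rmax_l|apply Rmax_r]).
  assert (Cc2 : c2 <= C) by (eapply Rle_trans; [apply Rmax_r|apply Rmax_r]).
  split; [exact C1|]. intros x hx.
  pose proof (fpos x hx). pose proof (Fnn x hx).
  pose proof (lower x hx). pose proof (upper x hx).
  split; [|nra].
  apply Rmult_le_reg_l with C; [lra|].
  rewrite <- Rmult_assoc, Rinv_r, Rmult_1_l by lra. nra.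
Qed.

Section Transfer.

Variables (D : nat) (g : R -> R) (ds : nat -> nat) (L U : R).
Hypothesis gpos : forall x, 1 < x -> 0 < g x.
Hypothesis gmono : forall x y, 1 < x -> x <= y -> g x <= g y.
Hypothesis gup : forall x, 1 < x -> g (qq D * x) <= INR D * g x.
Hypothesis ds_range : forall i, (2 <= ds i <= D)%nat.
Hypothesis L_pos : 0 < L.
Hypothesis U_nonneg : 0 <= U.
Hypothesis bound_at_Q : forall n,
  L * g (/ prodp ds (S n)) <= prodd ds (S n) <= U * g (/ prodp ds (S n)).

Let ds_ge2 i : (2 <= ds i)%nat := proj1 (ds_range i).

Lemma digit_le_D i : INR (ds i) <= INR D.
Proof. apply le_INR, ds_range. Qed.

(* Lower bound: g(x) <= g(Q_{k+1}) <= H_{k+1} / L. *)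
Lemma h_lower x : 1 < x -> g x <= / L * h ds x.
Proof.
  intro hx. destruct (kx_spec ds ds_ge2 x hx) as [hxk _]. unfold h.
  set (Q := / prodp ds (S (kx ds x))) in hxk |- *.
  destruct (bound_at_Q (kx ds x)) as [hlo _]. fold Q in hlo.
  assert (g x <= g Q) by (apply gmono; assumption).
  assert (/ L * (L * g Q) = g Q) by (field; lra).
  pose proof (Rinv_0_lt_compat L L_pos). nra.
Qed.

(* Upper bound on the first interval (1, Q_1]: there h = d_0 <= D, while
   g(q(D)) <= g(q(D) x) <= D g(x) bounds g from below. *)
Lemma h_upper_first x : 1 < x -> prodd ds 1 <= INR D ^ 2 / g (qq D) * g x.
Proof.
  intro hx. pose proof (gpos x hx).
  assert (hD2 : (2 <= D)%nat) by (destruct (ds_range O); lia).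
  assert (hD : 2 <= INR D) by (apply (le_INR 2), hD2).
  pose proof (qq_ge4 D hD2) as hqD.
  pose proof (gpos (qq D) ltac:(lra)) as gqD.
  assert (hgx : g (qq D) <= INR D * g x).
  { eapply Rle_trans; [|apply gup, hx]. apply gmono; nra. }
  set (r := INR D ^ 2 / g (qq D)).
  assert (hr : r * g (qq D) = INR D * INR D) by (unfold r; field; lra).
  assert (hr0 : 0 <= r) by (unfold r; apply Rle_mult_inv_pos; nra).
  pose proof (digit_le_D O). simpl prodd. nra.
Qed.

(* Upper bound beyond Q_1: H_{k+1} <= D H_k <= D U g(Q_k) <= D U g(x). *)
Lemma h_upper_later x m : / prodp ds (S m) < x -> prodd ds (S (S m)) <= INR D * U * g x.
Proof.
  intro hx. pose proof (prodp_inv_succ_gt1 ds ds_ge2 m).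
  destruct (bound_at_Q m) as [_ hhi].
  assert (g (/ prodp ds (S m)) <= g x) by (apply gmono; lra).
  pose proof (digit_le_D (S m)). pose proof (prodd_pos ds ds_ge2 (S m)).
  change (prodd ds (S (S m))) with (prodd ds (S m) * INR (ds (S m))).
  assert (prodd ds (S m) <= U * g x) by nra.
  pose proof (pos_INR D). nra.
Qed.

Lemma h_comparable :
  exists C, 1 <= C /\ forall x, 1 < x -> / C * g x <= h ds x <= C * g x.
Proof.
  apply comparable_of_bounds with
    (c1 := / L) (c2 := Rmax (INR D * U) (INR D ^ 2 / g (qq D))).
  - exact gpos.
  - intros x _. left. apply prodd_pos, ds_ge2.
  - exact h_lower.
  - intros x hx. pose proof (gpos x hx).
    pose proof (Rmax_l (INR D * U) (INR D ^ 2 / g (qq D))).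
    pose proof (Rmax_r (INR D * U) (INR D ^ 2 / g (qq D))).
    destruct (kx_spec ds ds_ge2 x hx) as [_ hkx]. unfold h.
    destruct (kx ds x) as [|m].
    + pose proof (h_upper_first x hx). nra.
    + pose proof (h_upper_later x m hkx). nra.
Qed.

End Transfer.

Section Greedy.

Variables (d D : nat) (g : R -> R).
Hypothesis hd : (2 <= d)%nat.
Hypothesis hdD : (d <= D)%nat.
Hypothesis gpos : forall x, 1 < x -> 0 < g x.
Hypothesis gmono : forall x y, 1 < x -> x <= y -> g x <= g y.
Hypothesis glow : forall x, 1 < x -> INR d * g x <= g (qq d * x).
Hypothesis gup : forall x, 1 < x -> g (qq D * x) <= INR D * g x.

Lemma scale_bounds c x : (d <= c <= D)%nat -> 1 < x ->
  INR d * g x <= g (qq c * x) <= INR D * g x.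
Proof.
  intros [hdc hcD] hx.
  pose proof (qq_ge4 d hd).
  pose proof (qq_mono d c hd hdc).
  pose proof (qq_mono c D (Nat.le_trans _ _ _ hd hdc) hcD).
  split.
  - eapply Rle_trans; [apply glow, hx|]. apply gmono; nra.
  - eapply Rle_trans; [|apply gup, hx]. apply gmono; nra.
Qed.

Definition greedy_digit (H Q : R) : nat := if Rle_dec (g Q) H then d else D.

Fixpoint greedy_state (n : nat) : R * R :=
  match n with
  | O => (1, 1)
  | S m =>
      let s := greedy_state m in
      let c := greedy_digit (fst s) (snd s) in
      (fst s * INR c, qq c * snd s)
  end.

Definition greedy (n : nat) : nat :=
  greedy_digit (fst (greedy_state n)) (snd (greedy_state n)).

Lemma greedy_values i : greedy i = d \/ greedy i = D.
Proof. unfold greedy, greedy_digit. destruct Rle_dec; auto. Qed.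

Lemma greedy_range i : (2 <= greedy i <= D)%nat.
Proof. destruct (greedy_values i) as [-> | ->]; lia. Qed.

Lemma greedy_ge2 i : (2 <= greedy i)%nat.
Proof. apply greedy_range. Qed.

Lemma greedy_state_spec n : greedy_state n = (prodd greedy n, / prodp greedy n).
Proof.
  induction n as [|n IH].
  - simpl. rewrite Rinv_1. reflexivity.
  - change (greedy_state (S n))
      with (fst (greedy_state n) * INR (greedy n), qq (greedy n) * snd (greedy_state n)).
    rewrite IH, prodp_inv_succ by exact greedy_ge2. reflexivity.
Qed.

Lemma greedy_digit_spec n :
  greedy n = greedy_digit (prodd greedy n) (/ prodp greedy n).
Proof. unfold greedy at 1. rewrite greedy_state_spec. reflexivity. Qed.

Lemma greedy_step L U H Q : 1 < Q -> 0 <= L -> 0 <= U ->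
  L * INR D <= INR d -> INR D <= U * INR d ->
  L * g Q <= H <= U * g Q ->
  L * g (qq (greedy_digit H Q) * Q) <= H * INR (greedy_digit H Q)
    <= U * g (qq (greedy_digit H Q) * Q).
Proof.
  intros hQ hL hU hLD hUd [hlo hhi].
  pose proof (gpos Q hQ).
  assert (hd' : 2 <= INR d) by (apply (le_INR 2); exact hd).
  assert (hdD' : INR d <= INR D) by (apply le_INR; exact hdD).
  unfold greedy_digit. destruct (Rle_dec (g Q) H) as [ahead | behind].
  - destruct (scale_bounds d Q) as [lo hi]; [lia | exact hQ |].
    assert (L * g (qq d * Q) <= L * INR D * g Q) by nra.
    assert (L * INR D * g Q <= INR d * H) by nra.
    assert (H * INR d <= U * INR d * g Q) by nra.
    split; nra.
  - destruct (scale_bounds D Q) as [lo hi]; [lia | exact hQ |].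
    assert (L * g (qq D * Q) <= INR D * (L * g Q)) by nra.
    assert (H * INR D <= U * INR d * g Q) by nra.
    split; nra.
Qed.

Lemma greedy_invariant L U :
  0 <= L -> 0 <= U -> L * INR D <= INR d -> INR D <= U * INR d ->
  L * g (/ prodp greedy 1) <= prodd greedy 1 <= U * g (/ prodp greedy 1) ->
  forall n, L * g (/ prodp greedy (S n)) <= prodd greedy (S n)
              <= U * g (/ prodp greedy (S n)).
Proof.
  intros hL hU hLD hUd base n. induction n as [|n IH]; [exact base|].
  rewrite prodp_inv_succ by exact greedy_ge2.
  change (prodd greedy (S (S n))) with (prodd greedy (S n) * INR (greedy (S n))).
  rewrite greedy_digit_spec.
  apply greedy_step; try assumption. apply prodp_inv_succ_gt1, greedy_ge2.
Qed.

Lemma greedy_bounded : exists L U, 0 < L /\ 0 <= U /\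
  forall n, L * g (/ prodp greedy (S n)) <= prodd greedy (S n)
              <= U * g (/ prodp greedy (S n)).
Proof.
  assert (hd' : 2 <= INR d) by (apply (le_INR 2); exact hd).
  assert (hdD' : INR d <= INR D) by (apply le_INR; exact hdD).
  set (H1 := prodd greedy 1). set (G1 := g (/ prodp greedy 1)).
  assert (hH1 : 0 < H1) by (apply prodd_pos, greedy_ge2).
  assert (hG1 : 0 < G1) by (apply gpos, prodp_inv_succ_gt1, greedy_ge2).
  set (L := Rmin (H1 / G1) (INR d / INR D)).
  set (U := Rmax (H1 / G1) (INR D / INR d)).
  assert (r1 : H1 / G1 * G1 = H1) by (field; lra).
  assert (rD : INR d / INR D * INR D = INR d) by (field; lra).
  assert (rd : INR D / INR d * INR d = INR D) by (field; lra).
  pose proof (Rmin_l (H1 / G1) (INR d / INR D)). pose proof (Rmin_r (H1 / G1) (INR d / INR D)).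
  pose proof (Rmax_l (H1 / G1) (INR D / INR d)). pose proof (Rmax_r (H1 / G1) (INR D / INR d)).
  pose proof (Rdiv_lt_0_compat H1 G1 hH1 hG1).
  assert (hL : 0 < L) by (apply Rmin_pos; [|apply Rdiv_lt_0_compat]; lra).
  assert (hU : 0 <= U) by (unfold U; lra).
  exists L, U. split; [exact hL|]. split; [exact hU|].
  apply greedy_invariant; [lra | exact hU | unfold L; nra | unfold U; nra |].
  fold H1 G1. unfold L, U. split; nra.
Qed.

End Greedy.

Theorem mainTheorem9 (d D : nat) (g : R -> R)
  (hd : (2 <= d)%nat) (hdD : (d <= D)%nat)
  (gpos : forall x, 1 < x -> 0 < g x)
  (gmono : forall x y, 1 < x -> x <= y -> g x <= g y)
  (glow : forall x, 1 < x ->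
     INR d * g x <= g ((INR d)^2 / (INR d - 1) * x))
  (gup : forall x, 1 < x ->
     g ((INR D)^2 / (INR D - 1) * x) <= INR D * g x) :
  exists (ds : nat -> nat) (C : R),
    (forall i, ds i = d \/ ds i = D) /\ 1 <= C /\
    forall x, 1 < x -> / C * g x <= h ds x /\ h ds x <= C * g x.
Proof.
  destruct (greedy_bounded d D g hd hdD gpos gmono glow gup)
    as (L & U & hL & hU & bound).
  destruct (h_comparable D g (greedy d D g) L U gpos gmono gup
              (greedy_range d D g hd hdD) hL hU bound) as (C & C1 & HC).
  exists (greedy d D g), C.
  split; [apply greedy_values|]. split; [exact C1|exact HC].
Qed.
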